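(* Let $S$ be a standard quantum entity on a finite-dimensional complex Hilbert space $\mathcal{H}$. For any two experiments $e_E,e_F$, either $e_E=e_F$ or $e_E\perp e_F$.
   Context: A spectral family of $\mathcal{H}$ is a set $E=\{E_1,\dots,E_r\}$ of pairwise orthogonal nonzero orthogonal projections with $\sum_kE_k=I$. The standard quantum entity on $\mathcal{H}$ has states $p_{\bar c}$, one for each ray $\bar c$ (generated by a unit vector $c$), experiments $e_E$, one for each spectral family $E$ (so $e_E=e_F$ iff $E=F$), outcomes $x_{E_k}$, one for each orthogonal projection $E_k$, and outcome sets $O(e_E,p_{\bar c})=\{x_{E_k}:E_k\in E,\ E_kc\neq0\}$. Experiment orthogonality: $e\perp f$ iff there is a state $p$ with $O(e,p)\cap O(f,p)=\emptyset$. *)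

From HB Require Import structures.
From mathcomp Require Import all_boot all_order all_algebra.
From mathcomp Require Import finmap.
From mathcomp Require Import reals.
From mathcomp.real_closed Require Import complex.
Set Implicit Arguments. Unset Strict Implicit. Unset Printing Implicit Defensive.
Import Order.TTheory GRing.Theory Num.Theory.
Local Open Scope ring_scope.
Local Open Scope fset_scope.

(* The Hilbert space H = C^n (column vectors), C = R[i] the complex numbers. *)

Definition mxadj (C : numClosedFieldType) m n (A : 'M[C]_(m, n)) : 'M[C]_(n, m) :=
  (map_mx Num.conj A)^T.

Definition orth_proj (C : numClosedFieldType) n (P : 'M[C]_n) : Prop :=
  P *m P = P /\ mxadj P = P.

Definition spectral_family (C : numClosedFieldType) n (E : {fset 'M[C]_n}) : Prop :=
  (forall P, P \in E -> orth_proj P /\ P != 0) /\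
  (forall P Q, P \in E -> Q \in E -> P != Q -> P *m Q = 0) /\
  \sum_(P <- E) P = 1%:M.

(* unit vectors (generators of rays; states p_{c̄}) *)
Definition unit_vector (C : numClosedFieldType) n (c : 'cV[C]_n) : Prop :=
  mxadj c *m c = 1%:M.

(* outcome set O(e_E, p_c) : outcomes x_{E_k} identified with projections E_k *)
Definition outcome_set (C : numClosedFieldType) n (E : {fset 'M[C]_n}) (c : 'cV[C]_n)
  : {fset 'M[C]_n} := [fset P in E | P *m c != 0].

Definition exp_orth (C : numClosedFieldType) n (E F : {fset 'M[C]_n}) : Prop :=
  exists c : 'cV[C]_n, unit_vector c /\ outcome_set E c `&` outcome_set F c = fset0.

From HB Require Import structures.
From mathcomp Require Import all_boot all_order all_algebra.
From mathcomp Require Import finmap.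
From mathcomp Require Import reals.
From mathcomp.real_closed Require Import complex.
Import Order.TTheory GRing.Theory Num.Theory.
Local Open Scope ring_scope.
Local Open Scope fset_scope.
Local Open Scope complex_scope.

(* Let S be the sum of the common projections of E and F.  If S = 1, a
   projection P in E outside F satisfies P = P S = 0, since P is orthogonal
   to every member of E `&` F; hence E = F.  Otherwise 1 - S has a nonzero
   column w, which every common projection kills, so the state of w has
   disjoint outcome sets for e_E and e_F. *)

Section Adjoint.

Context {C : numClosedFieldType} {n : nat}.

Lemma mxadjZ m p (a : C) (A : 'M[C]_(m, p)) : mxadj (a *: A) = a^* *: mxadj A.
Proof. by apply/matrixP => i j; rewrite !mxE rmorphM. Qed.

Lemma mxadj_self_entry (w : 'cV[C]_n) :
  (mxadj w *m w) 0 0 = \sum_i `|w i 0| ^+ 2.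
Proof. by rewrite !mxE; apply: eq_bigr => i _; rewrite !mxE normCKC. Qed.

Lemma mxadj_self_eq0 (w : 'cV[C]_n) : ((mxadj w *m w) 0 0 == 0) = (w == 0).
Proof.
rewrite mxadj_self_entry psumr_eq0 => [|i _]; last exact: exprn_ge0.
apply/allP/eqP => [w0|-> i _ /=]; last by rewrite mxE normr0 expr0n.
apply/matrixP => i j; rewrite (ord1 j) mxE.
by have := w0 i (mem_index_enum _); rewrite /= sqrf_eq0 normr_eq0 => /eqP.
Qed.

Lemma unit_vector_scale {w : 'cV[C]_n} :
  w != 0 -> exists k : C, unit_vector (k *: w).
Proof.
move=> w_neq0; set a := (mxadj w *m w) 0 0.
have a_ge0 : 0 <= a.
  by rewrite /a mxadj_self_entry sumr_ge0 // => i _; exact: exprn_ge0.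
have a_neq0 : a != 0 by rewrite mxadj_self_eq0.
have s_ge0 : 0 <= sqrtC a by rewrite sqrtC_ge0.
have s_neq0 : sqrtC a != 0 by rewrite sqrtC_eq0.
exists (sqrtC a)^-1; rewrite /unit_vector mxadjZ geC0_conj ?invr_ge0 //.
rewrite -scalemxAl -scalemxAr scalerA (mx11_scalar (mxadj w *m w)) -/a.
by rewrite scale_scalar_mx -invrM ?unitfE // -expr2 sqrtCK mulVf.
Qed.

End Adjoint.

Section SpectralFamily.

Context {C : numClosedFieldType} {n : nat} {E : {fset 'M[C]_n}}.
Hypothesis sE : spectral_family E.

Lemma spectral_mulmx_sum (S : {fset 'M[C]_n}) P : S `<=` E -> P \in E ->
  P *m \sum_(Q <- S) Q = if P \in S then P else 0.
Proof.
case: sE => [proj_E [orth_E _]] /fsubsetP SE PE; rewrite mulmx_sumr.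
case: ifP => PS.
  rewrite (bigD1_seq P) //= big1_seq ?addr0; first by case: (proj_E P PE) => [[]].
  by move=> Q /andP[QP QS]; apply: orth_E => //; [exact: SE | rewrite eq_sym].
rewrite big1_seq // => Q /andP[_ QS]; apply: orth_E => //; first exact: SE.
by apply: contraFN PS => /eqP ->.
Qed.

Lemma spectral_sum_eq1_fsubset (F : {fset 'M[C]_n}) :
  \sum_(Q <- E `&` F) Q = 1%:M -> E `<=` F.
Proof.
move=> sum1; apply/fsubsetP => P PE; apply: contraT => PF.
have := @spectral_mulmx_sum (E `&` F) P (fsubsetIl E F) PE.
rewrite sum1 mulmx1 inE PE (negbTE PF) => P0.
by case: sE => [proj_E _]; case: (proj_E P PE); rewrite P0 eqxx.
Qed.

End SpectralFamily.

Lemma exp_orth_common_kernel {C : numClosedFieldType} {n} {E F : {fset 'M[C]_n}}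
    {w : 'cV[C]_n} :
  w != 0 -> (forall P, P \in E `&` F -> P *m w = 0) -> exp_orth E F.
Proof.
move=> w_neq0 kill_w; have [k unit_kw] := unit_vector_scale w_neq0.
exists (k *: w); split => //; apply/eqP; rewrite -fsubset0; apply/fsubsetP => P.
rewrite !inE => /andP[/andP[PE _] /andP[PF Pkw_neq0]].
by move: Pkw_neq0; rewrite -scalemxAr kill_w ?scaler0 ?eqxx // inE PE PF.
Qed.

Lemma mx_neq0_col (C : nmodType) m p (A : 'M[C]_(m, p)) :
  A != 0 -> exists j, col j A != 0.
Proof.
move=> A_neq0; apply/existsP; apply: contraNT A_neq0; rewrite negb_exists.
move=> /forallP col_eq0; apply/eqP/matrixP => i j.
by have /negPn/eqP/matrixP/(_ i 0) := col_eq0 j; rewrite !mxE.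
Qed.

Theorem mainTheorem19 (R : realType) (n : nat) (E F : {fset 'M[R[i]]_n}) :
  spectral_family E -> spectral_family F ->
  E = F \/ exp_orth E F.
Proof.
move=> sE sF; set S := \sum_(Q <- E `&` F) Q.
have [S1|S_neq1] := eqVneq S 1%:M.
  left; apply/eqP; rewrite eqEfsubset spectral_sum_eq1_fsubset //=.
  by apply: spectral_sum_eq1_fsubset; rewrite // fsetIC.
right; have [j col_neq0] : exists j, col j (1%:M - S) != 0.
  by apply: mx_neq0_col; rewrite subr_eq0 eq_sym.
apply: (exp_orth_common_kernel col_neq0) => P PEF.
have PE : P \in E by move: PEF; rewrite inE => /andP[].
rewrite colE mulmxA mulmxBr mulmx1 (spectral_mulmx_sum sE) ?fsubsetIl // PEF.
by rewrite subrr mul0mx.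
Qed.
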